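(* Let $k$ be an algebraically closed field, let $A$ be a local Noetherian $k$-algebra with residue field $k$, and let $M$ be a finitely generated $A$-module. Then $M$ is free if and only if for every integer $n > 0$ and every ideal $I_n \subset A$ of colength $n$, $$\frac{\dim_k (M \otimes_A A/I_n)}{n} = \dim_k (M \otimes_A k).$$
   Context: An ideal $I \subset A$ is said to be of colength $n$ if $A/I$ is an Artinian $k$-algebra with $\dim_k A/I = n$. *)

From HB Require Import structures.
From mathcomp Require Import all_boot all_order all_algebra.
Set Implicit Arguments. Unset Strict Implicit. Unset Printing Implicit Defensive.
Import GRing.Theory.
Local Open Scope ring_scope.

Section Defs.
Variable k : fieldType.
Variable A : comAlgType k.

Definition is_ideal (I : A -> Prop) : Prop :=
  [/\ I 0, (forall x y, I x -> I y -> I (x + y)) & (forall a x, I x -> I (a * x))].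

Definition ideal_sub (I J : A -> Prop) : Prop := forall x, I x -> J x.

Definition noetherian : Prop :=
  forall I : A -> Prop, is_ideal I ->
    exists (n : nat) (g : 'I_n -> A),
      (forall i, I (g i)) /\
      (forall x, I x -> exists c : 'I_n -> A, x = \sum_(i < n) c i * g i).

(* m is the maximal ideal of the local ring A (the unique maximal ideal:
   it is proper and contains every proper ideal), with residue field k,
   i.e. the structure map k -> A/m is surjective (it is automatically
   injective). *)
Definition local_with_residue_field (m : A -> Prop) : Prop :=
  [/\ is_ideal m, ~ m 1,
      (forall J, is_ideal J -> ~ J 1 -> ideal_sub J m)
    & (forall a : A, exists c : k, m (a - c%:A))].

(* A/I is Artinian: DCC on ideals of A containing I *)
Definition quotient_artinian (I : A -> Prop) : Prop :=
  forall J : nat -> (A -> Prop),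
    (forall n, [/\ is_ideal (J n), ideal_sub I (J n) & ideal_sub (J n.+1) (J n)]) ->
    exists N, forall n, (N <= n)%N -> forall x, J n x <-> J N x.

(* dim_k (V / N) = d, for a k-subspace N of a k-vector space V whose
   k-scalar multiplication is s *)
Definition qdim (V : zmodType) (s : k -> V -> V) (N : V -> Prop) (d : nat) : Prop :=
  exists v : 'I_d -> V,
    (forall x, exists c : 'I_d -> k, N (x - \sum_(i < d) s (c i) (v i))) /\
    (forall c : 'I_d -> k, N (\sum_(i < d) s (c i) (v i)) -> forall i, c i = 0).

Definition colength (I : A -> Prop) (n : nat) : Prop :=
  [/\ is_ideal I, quotient_artinian I & qdim (fun c (a : A) => c *: a) I n].

Variable M : lmodType A.

Definition kscale (c : k) (x : M) : M := c%:A *: x.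

Definition idealM (I : A -> Prop) (x : M) : Prop :=
  exists (n : nat) (a : 'I_n -> A) (y : 'I_n -> M),
    (forall i, I (a i)) /\ x = \sum_(i < n) a i *: y i.

(* dim_k (M ⊗_A A/I) = d, using M ⊗_A A/I = M / I M *)
Definition tensor_dim (I : A -> Prop) (d : nat) : Prop := qdim kscale (idealM I) d.

Definition fin_gen_module : Prop :=
  exists (n : nat) (g : 'I_n -> M),
    forall x, exists c : 'I_n -> A, x = \sum_(i < n) c i *: g i.

Definition free_module : Prop :=
  exists (J : eqType) (e : J -> M),
    (forall x, exists (s : seq J) (c : J -> A), x = \sum_(j <- s) c j *: e j) /\
    (forall (s : seq J) (c : J -> A), uniq s ->
       \sum_(j <- s) c j *: e j = 0 -> forall j, j \in s -> c j = 0).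

End Defs.

(* If [M] is free of rank [R], then [M / I M] is [(A / I)^R], of dimension [n R],
   and [M / m M] has dimension [R]. Conversely, lift a [k]-basis of [M / m M] to
   [v_1, ..., v_r]; by Nakayama's lemma these generate [M]. Given a relation
   [\sum_i c_i v_i = 0] with [c_i0 <> 0], let [Q] be an ideal maximal among those
   not containing [c_i0] (it exists since [A] is Noetherian). For [x] in [m] the
   colon ideals [(Q : x^n)] stabilise, and maximality then forces a power of [x]
   into [Q]; as [m] is finitely generated, [Q] contains a power of [m], so [A / Q]
   has some finite colength [n > 0]. Now [M / Q M] is spanned by the [n r]
   products [w_a v_i] of a basis [w] of [A / Q] with the [v_i], and the relation,
   nontrivial modulo [Q], makes them dependent: [dim M / Q M < n r], against the
   hypothesis. *)

From HB Require Import structures.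
From mathcomp Require Import all_boot all_order all_algebra.
From mathcomp Require Import boolp zify.
Set Implicit Arguments. Unset Strict Implicit. Unset Printing Implicit Defensive.
Import GRing.Theory.
Local Open Scope ring_scope.

Lemma ex_maxn_Prop (P : nat -> Prop) n0 B :
  P n0 -> (forall n, P n -> (n <= B)%N) ->
  exists n, P n /\ forall p, P p -> (p <= n)%N.
Proof.
move=> Pn0 PB.
have exP : exists i, `[< P i >] by exists n0; apply/asboolP.
have ubP : forall i, `[< P i >] -> (i <= B)%N by move=> i /asboolP; apply: PB.
case: (ex_maxnP exP ubP) => i /asboolP Pi maxi.
by exists i; split=> // p Pp; apply: maxi; apply/asboolP.
Qed.

(* [s] makes [V] a [k]-vector space and [N] is a subspace: the statements
   below are linear algebra in [V / N], which is never formed as a type. *)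
Record lin_subspace (k : fieldType) (V : zmodType) (s : k -> V -> V)
    (N : V -> Prop) : Prop := LinSubspace {
  subspace0 : N 0;
  subspaceD : forall x y, N x -> N y -> N (x + y);
  subspaceZ : forall c x, N x -> N (s c x);
  scalevDr : forall c x y, s c (x + y) = s c x + s c y;
  scalevDl : forall c d x, s (c + d) x = s c x + s d x;
  scalevA : forall c d x, s c (s d x) = s (c * d) x;
  scale1v : forall x, s 1 x = x }.

Section QuotientSpace.
Variables (k : fieldType) (V : zmodType) (s : k -> V -> V) (N : V -> Prop).
Hypothesis NS : lin_subspace s N.

Let N0 := subspace0 NS.
Let ND := subspaceD NS.
Let NZ := subspaceZ NS.
Let sDr := scalevDr NS.
Let sDl := scalevDl NS.
Let sA := scalevA NS.
Let s1 := scale1v NS.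

Lemma scale0v x : s 0 x = 0.
Proof. by apply: (addrI (s 0 x)); rewrite addr0 -sDl addr0. Qed.

Lemma scalev0 c : s c 0 = 0.
Proof. by apply: (addrI (s c 0)); rewrite addr0 -sDr addr0. Qed.

Lemma scalevN c x : s c (- x) = - s c x.
Proof. by apply/eqP; rewrite -subr_eq0 opprK -sDr addNr scalev0. Qed.

Lemma scaleNv c x : s (- c) x = - s c x.
Proof. by apply/eqP; rewrite -subr_eq0 opprK -sDl addNr scale0v. Qed.

Lemma scalevB c x y : s c (x - y) = s c x - s c y.
Proof. by rewrite sDr scalevN. Qed.

Lemma subspace_sum (T : Type) (r : seq T) (P : pred T) (F : T -> V) :
  (forall i, P i -> N (F i)) -> N (\sum_(i <- r | P i) F i).
Proof. by move=> NF; elim/big_ind: _ => //; apply: ND. Qed.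

Lemma scalev_sumr (T : Type) (r : seq T) (P : pred T) (F : T -> V) c :
  s c (\sum_(i <- r | P i) F i) = \sum_(i <- r | P i) s c (F i).
Proof. exact: (big_morph (s c) (sDr c) (scalev0 c)). Qed.

Lemma scalev_suml (T : Type) (r : seq T) (P : pred T) (F : T -> k) x :
  s (\sum_(i <- r | P i) F i) x = \sum_(i <- r | P i) s (F i) x.
Proof. exact: (big_morph (s^~ x) (fun c d => sDl c d x) (scale0v x)). Qed.

Definition lcomb (T : finType) (c : T -> k) (w : T -> V) := \sum_i s (c i) (w i).

Definition free_mod (T : finType) (w : T -> V) :=
  forall c, N (lcomb c w) -> forall i, c i = 0.

Definition in_span_mod (T : finType) (w : T -> V) x := exists c, N (x - lcomb c w).

Definition spanning_mod (T : finType) (w : T -> V) := forall x, in_span_mod w x.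

Lemma lcomb_delta (T : finType) (w : T -> V) t :
  lcomb (fun t' => (t' == t)%:R) w = w t.
Proof.
rewrite /lcomb (bigD1 t) //= eqxx s1 big1 ?addr0 // => t' /negbTE ->.
by rewrite scale0v.
Qed.

Lemma in_span_mod_self (T : finType) (w : T -> V) t : in_span_mod w (w t).
Proof. by exists (fun t' => (t' == t)%:R); rewrite lcomb_delta subrr. Qed.

Lemma lcomb_comp (P Q : finType) (w : P -> V) (u : Q -> V) (a : P -> Q -> k) c :
  (forall j, N (w j - lcomb (a j) u)) ->
  N (lcomb c w - lcomb (fun l => \sum_j c j * a j l) u).
Proof.
move=> wu.
have -> : lcomb (fun l => \sum_j c j * a j l) u = \sum_j s (c j) (lcomb (a j) u).
  rewrite /lcomb; under eq_bigr do rewrite scalev_suml.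
  rewrite exchange_big /=; apply: eq_bigr => j _.
  by rewrite scalev_sumr; apply: eq_bigr => l _; rewrite sA.
by rewrite /lcomb -sumrB; apply: subspace_sum => j _; rewrite -scalevB; apply: NZ.
Qed.

Lemma in_span_mod_trans (P Q : finType) (w : P -> V) (u : Q -> V) x :
  in_span_mod w x -> (forall j, in_span_mod u (w j)) -> in_span_mod u x.
Proof.
move=> [c xc] /choice[a wa]; exists (fun l => \sum_j c j * a j l).
by rewrite -(addrNK (lcomb c w) x) -addrA; apply: ND => //; apply: lcomb_comp.
Qed.

(* When [#|P| > #|Q|], a nonzero vector in the kernel of the [#|P| x #|Q|]
   coefficient matrix gives a relation among the [w]s. *)
Lemma free_mod_card_leq (P Q : finType) (w : P -> V) (u : Q -> V) :
  free_mod w -> (forall j, in_span_mod u (w j)) -> (#|P| <= #|Q|)%N.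
Proof.
move=> w_free /choice[a wa]; rewrite leqNgt; apply/negP => ltQP.
pose Am : 'M[k]_(#|P|, #|Q|) := \matrix_(i, j) a (enum_val i) (enum_val j).
have /rowV0Pn[b /sub_kermxP bA /eqP b_neq0] : kermx Am != 0.
  by rewrite kermx_eq0 /row_free neq_ltn (leq_ltn_trans (rank_leq_col _) ltQP).
pose c j := b 0 (enum_rank j).
have Nc : N (lcomb c w).
  have := lcomb_comp c wa; rewrite [X in N (_ - X)]big1 ?subr0 // => l _.
  suff -> : \sum_j c j * a j l = (b *m Am) 0 (enum_rank l) by rewrite bA mxE scale0v.
  rewrite mxE (reindex (@enum_rank P)) /=; last first.
    by exists enum_val => x _; rewrite ?enum_valK ?enum_rankK.
  by apply: eq_bigr => j _; rewrite !mxE !enum_rankK.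
apply: b_neq0; apply/rowP => i; rewrite mxE.
by have := w_free c Nc (enum_val i); rewrite /c enum_valK.
Qed.

Definition extend p (w : 'I_p -> V) x (i : 'I_p.+1) : V :=
  if unlift ord_max i is Some j then w j else x.

Lemma extend_widen p (w : 'I_p -> V) x j : extend w x (widen_ord (leqnSn p) j) = w j.
Proof.
have -> : widen_ord (leqnSn p) j = lift ord_max j.
  by apply: val_inj; rewrite /= /bump leqNgt ltn_ord.
by rewrite /extend liftK.
Qed.

Lemma extend_max p (w : 'I_p -> V) x : extend w x ord_max = x.
Proof. by rewrite /extend unlift_none. Qed.

Lemma lcomb_extend p (c : 'I_p.+1 -> k) (w : 'I_p -> V) x :
  lcomb c (extend w x) =
  lcomb (fun j => c (widen_ord (leqnSn p) j)) w + s (c ord_max) x.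
Proof.
by rewrite /lcomb big_ord_recr extend_max; under eq_bigr do rewrite extend_widen.
Qed.

Lemma free_mod_extend p (w : 'I_p -> V) x :
  free_mod w -> ~ in_span_mod w x -> free_mod (extend w x).
Proof.
move=> w_free x_out c Nc.
have c_max : c ord_max = 0.
  apply: contrapT => /eqP c_max; apply: x_out.
  exists (fun j => - (c ord_max)^-1 * c (widen_ord (leqnSn p) j)).
  suff -> : x - lcomb (fun j => - (c ord_max)^-1 * c (widen_ord (leqnSn p) j)) w =
            s (c ord_max)^-1 (lcomb c (extend w x)) by apply: NZ.
  rewrite lcomb_extend sDr sA mulVf // s1 addrC; congr (_ + _).
  rewrite /lcomb scalev_sumr -sumrN; apply: eq_bigr => j _.
  by rewrite sA mulNr scaleNv opprK.
have c_widen j : c (widen_ord (leqnSn p) j) = 0.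
  apply: (w_free (fun j => c (widen_ord (leqnSn p) j))).
  by move: Nc; rewrite lcomb_extend c_max scale0v addr0.
move=> i; case: (unliftP ord_max i) => [j ->|-> //].
by rewrite -(c_widen j); congr c; apply: val_inj; rewrite /= /bump leqNgt ltn_ord.
Qed.

Lemma free_mod0 (w : 'I_0 -> V) : free_mod w.
Proof. by move=> c _ []. Qed.

Lemma ex_basis_mod (Q : finType) (u : Q -> V) :
  spanning_mod u -> exists d (v : 'I_d -> V), spanning_mod v /\ free_mod v.
Proof.
move=> u_span.
pose has_free n := exists v : 'I_n -> V, free_mod v.
have has_free_leq n : has_free n -> (n <= #|Q|)%N.
  by move=> [v v_free]; rewrite -[n]card_ord; apply: free_mod_card_leq v_free _.
have has_free0 : has_free 0%N by exists (fun _ => 0); apply: free_mod0.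
have [d [[v v_free] d_max]] := ex_maxn_Prop has_free0 has_free_leq.
exists d, v; split=> // x; apply: contrapT => x_out.
have := d_max d.+1 (ex_intro _ _ (free_mod_extend v_free x_out)).
by rewrite ltnn.
Qed.

Lemma basis_mod_card (P Q : finType) (v : P -> V) (u : Q -> V) :
  spanning_mod v -> free_mod v -> spanning_mod u -> free_mod u -> #|P| = #|Q|.
Proof.
move=> v_span v_free u_span u_free; apply/eqP; rewrite eqn_leq.
rewrite (free_mod_card_leq v_free (fun i => u_span (v i))).
exact: (free_mod_card_leq u_free (fun j => v_span (u j))).
Qed.

(* A relation with a nonzero coefficient at [j0] lets [u j0] be dropped. *)
Lemma free_mod_card_lt_relation (P Q : finType) (v : P -> V) (u : Q -> V) c j0 :
  spanning_mod u -> N (lcomb c u) -> c j0 != 0 -> free_mod v -> (#|P| < #|Q|)%N.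
Proof.
move=> u_span Nc cj0 v_free.
pose u' (t : {j in predC1 j0}) := u (val t).
have u'_span j : in_span_mod u' (u j).
  have [->|j_neq] := eqVneq j j0; last exact: (in_span_mod_self u' (exist _ j j_neq)).
  exists (fun t => - c (val t) / c j0).
  suff -> : u j0 - lcomb (fun t => - c (val t) / c j0) u' = s (c j0)^-1 (lcomb c u)
    by apply: NZ.
  rewrite /lcomb (bigD1 j0) //= sDr sA mulVf // s1; congr (_ + _).
  rewrite (big_sub (predC1 j0)) /= scalev_sumr -sumrN; apply: eq_bigr => t _.
  by rewrite /u' sA mulNr scaleNv opprK mulrC.
have := free_mod_card_leq v_free (fun i => in_span_mod_trans (u_span (v i)) u'_span).
rewrite card_sig => /leq_ltn_trans; apply.
rewrite (@eq_card _ _ (predC1 j0)) // cardC1 ltn_predL.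
by apply/card_gt0P; exists j0.
Qed.

(* Measure [J n] by the largest size [g n] of a family inside it that is free
   modulo [N]: [g] is nonincreasing, and once it is minimal [J n] cannot shrink,
   since a vector of [J n0 \ J n] would extend a maximal family of [J n]. *)
Lemma descending_subspaces_stationary (Q : finType) (u : Q -> V) (J : nat -> V -> Prop) :
  spanning_mod u ->
  (forall n, [/\ lin_subspace s (J n), forall x, N x -> J n x
               & forall x, J n.+1 x -> J n x]) ->
  exists n0, forall n, (n0 <= n)%N -> forall x, J n x <-> J n0 x.
Proof.
move=> u_span J_spec.
have J_desc m n : (m <= n)%N -> forall x, J n x -> J m x.
  move=> /subnK <-; elim: (n - m)%N => [//|i IH] x.
  by rewrite addSn => /(let: And3 _ _ desc := J_spec _ in desc); apply: IH.
pose free_in n p := exists w : 'I_p -> V, free_mod w /\ forall i, J n (w i).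
have free_in0 n : free_in n 0%N by exists (fun _ => 0); split; [apply: free_mod0|case].
have free_in_leq n p : free_in n p -> (p <= #|Q|)%N.
  by move=> [w [w_free _]]; rewrite -[p]card_ord; apply: free_mod_card_leq w_free _.
have [g g_max] := choice (fun n => ex_maxn_Prop (free_in0 n) (@free_in_leq n)).
have exg : exists v, `[< exists n, g n = v >] by exists (g 0%N); apply/asboolP; exists 0%N.
case: (ex_minnP exg) => _ /asboolP[n0 <-] g_min.
exists n0 => n le_n0n x; split; first exact: J_desc.
move=> Jn0x; apply: contrapT => Jnx_out.
have [[w [w_free Jw]] _] := g_max n.
have [J_sub N_J _] := J_spec n.
have x_out : ~ in_span_mod w x.
  move=> [c Nxc]; apply: Jnx_out; rewrite -(subrK (lcomb c w) x).
  apply: (subspaceD J_sub); first exact: N_J.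
  apply: (big_ind (J n)) => [||i _].
  - exact: (subspace0 J_sub).
  - exact: (subspaceD J_sub).
  - exact/(subspaceZ J_sub)/Jw.
have : free_in n0 (g n).+1.
  exists (extend w x); split; first exact: free_mod_extend.
  by move=> i; rewrite /extend; case: unlift => [j|//]; apply: J_desc le_n0n _ (Jw j).
move=> /(g_max n0).2; rewrite ltnNge => /negP; apply.
by apply: g_min; apply/asboolP; exists n.
Qed.

End QuotientSpace.

Definition ord_cat (T : Type) m n (f : 'I_m -> T) (g : 'I_n -> T) (i : 'I_(m + n)) : T :=
  match split i with inl j => f j | inr j => g j end.

Lemma ord_cat_forall (T : Type) (P : T -> Prop) m n (f : 'I_m -> T) (g : 'I_n -> T) :
  (forall i, P (f i)) -> (forall i, P (g i)) -> forall i, P (ord_cat f g i).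
Proof. by move=> Pf Pg i; rewrite /ord_cat; case: (split i). Qed.

Lemma big_ord_cat2 (V : zmodType) (S T : Type) (F : S -> T -> V) m n
    (f1 : 'I_m -> S) (f2 : 'I_n -> S) (g1 : 'I_m -> T) (g2 : 'I_n -> T) :
  \sum_i F (ord_cat f1 f2 i) (ord_cat g1 g2 i) =
  \sum_i F (f1 i) (g1 i) + \sum_i F (f2 i) (g2 i).
Proof.
rewrite big_split_ord /= /ord_cat.
congr (_ + _); apply: eq_bigr => i _.
  by have /= -> := unsplitK (inl _ i).
by have /= -> := unsplitK (inr _ i).
Qed.

Section Ideals.
Variables (k : fieldType) (A : comAlgType k).
Implicit Types I J : A -> Prop.

Lemma idealZ I : is_ideal I -> forall c x, I x -> I (c *: x).
Proof. by case=> _ _ IM c x Ix; rewrite -mulr_algl; apply: IM. Qed.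

Lemma idealMr I : is_ideal I -> forall a x, I x -> I (x * a).
Proof. by case=> _ _ IM a x Ix; rewrite mulrC; apply: IM. Qed.

Lemma idealN I : is_ideal I -> forall x, I x -> I (- x).
Proof. by case=> _ _ IM x Ix; rewrite -mulN1r; apply: IM. Qed.

Lemma idealB I : is_ideal I -> forall x y, I x -> I y -> I (x - y).
Proof. by move=> I_id x y Ix Iy; have [_ ID _] := I_id; apply: ID => //; apply: idealN. Qed.

Lemma ideal_sum I : is_ideal I ->
  forall (T : Type) (r : seq T) (P : pred T) (F : T -> A),
  (forall i, P i -> I (F i)) -> I (\sum_(i <- r | P i) F i).
Proof. by case=> I0 ID _ T r P F IF; apply: big_ind. Qed.

Lemma lin_subspace_ideal I : is_ideal I -> lin_subspace (@GRing.scale k A) I.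
Proof.
move=> I_id; split; try by case: I_id.
- exact: idealZ.
- by move=> c x y; rewrite scalerDr.
- by move=> c d x; rewrite scalerDl.
- exact: scalerA.
- exact: scale1r.
Qed.

Variable M : lmodType A.

Lemma idealM0 I : idealM I (0 : M).
Proof. by exists 0%N, (fun _ => 0), (fun _ => 0); split; [case | rewrite big_ord0]. Qed.

Lemma idealMD I (x y : M) : idealM I x -> idealM I y -> idealM I (x + y).
Proof.
move=> [n1 [a1 [y1 [Ia1 ->]]]] [n2 [a2 [y2 [Ia2 ->]]]].
exists (n1 + n2)%N, (ord_cat a1 a2), (ord_cat y1 y2); split.
  exact: ord_cat_forall.
by rewrite (big_ord_cat2 (@GRing.scale A M)).
Qed.

Lemma idealMZ I (a : A) (x : M) : idealM I x -> idealM I (a *: x).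
Proof.
move=> [n [b [y [Ib ->]]]]; exists n, b, (fun i => a *: y i); split=> //.
by rewrite scaler_sumr; apply: eq_bigr => i _; rewrite !scalerA mulrC.
Qed.

Lemma idealM_scale I (a : A) (x : M) : I a -> idealM I (a *: x).
Proof. by move=> Ia; exists 1%N, (fun _ => a), (fun _ => x); rewrite big_ord1. Qed.

Lemma idealM_sum I (T : Type) (r : seq T) (P : pred T) (F : T -> M) :
  (forall i, P i -> idealM I (F i)) -> idealM I (\sum_(i <- r | P i) F i).
Proof. by move=> IF; apply: big_ind => //; [exact: idealM0 | exact: idealMD]. Qed.

Lemma lin_subspace_idealM I : lin_subspace (@kscale k A M) (idealM I).
Proof.
split.
- exact: idealM0.
- exact: idealMD.
- by move=> c x; apply: idealMZ.
- by move=> c x y; rewrite /kscale scalerDr.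
- by move=> c d x; rewrite /kscale scalerDl scalerDl.
- by move=> c d x; rewrite /kscale scalerA -scalerAl mul1r scalerA.
- by move=> x; rewrite /kscale !scale1r.
Qed.

End Ideals.

Section Nakayama.
Variables (k : fieldType) (A : comAlgType k) (m : A -> Prop).
Hypothesis m_local : local_with_residue_field m.

Lemma max_ideal : is_ideal m.
Proof. by case: m_local. Qed.

Lemma max_ideal_neq1 : ~ m 1.
Proof. by case: m_local. Qed.

Lemma residue_lift (a : A) : exists c : k, m (a - c%:A).
Proof. by case: m_local. Qed.

Lemma one_sub_max_unit b : m b -> exists u, u * (1 - b) = 1.
Proof.
move=> mb; pose J x := exists a, x = a * (1 - b).
have J_ideal : is_ideal J.
  split; first by exists 0; rewrite mul0r.
    by move=> x y [a ->] [a' ->]; exists (a + a'); rewrite mulrDl.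
  by move=> a x [a' ->]; exists (a * a'); rewrite mulrA.
have [[u u1]|J1_out] := pselect (J 1); first by exists u; rewrite -u1.
case: m_local => m_ideal m1_out m_max _; exfalso; apply: m1_out.
rewrite -(subrK b 1); have [_ mD _] := m_ideal; apply: mD => //.
by apply: (m_max J J_ideal J1_out); exists 1; rewrite mul1r.
Qed.

Variables (V : lmodType A) (S : V -> Prop).
Hypotheses (S0 : S 0) (SD : forall x y, S x -> S y -> S (x + y))
  (SZ : forall a x, S x -> S (a *: x)).
Hypothesis V_eq_S_mV : forall x : V, exists s n (a : 'I_n -> A) (y : 'I_n -> V),
  [/\ S s, forall i, m (a i) & x = s + \sum_i a i *: y i].

Definition gen_mod q (h : 'I_q -> V) :=
  forall x, exists s (c : 'I_q -> A), S s /\ x = s + \sum_j c j *: h j.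

Lemma S_sum (T : Type) (r : seq T) (F : T -> V) :
  (forall i, S (F i)) -> S (\sum_(i <- r) F i).
Proof. by move=> SF; apply: big_ind. Qed.

Lemma gen_mod_max_coef q (h : 'I_q -> V) : gen_mod h ->
  forall x, exists s (b : 'I_q -> A), [/\ S s, forall j, m (b j) & x = s + \sum_j b j *: h j].
Proof.
move=> h_gen x; have [s [n [a [y [Ss ma ->]]]]] := V_eq_S_mV x.
have [ys /choice[c ysc]] := choice (fun i => h_gen (y i)).
exists (s + \sum_i a i *: ys i), (fun j => \sum_i a i * c i j); split.
- by apply: SD => //; apply: S_sum => i; apply: SZ; case: (ysc i).
- by move=> j; apply: (ideal_sum max_ideal) => i _; apply: (idealMr max_ideal).
rewrite -addrA; congr (_ + _).
have -> : \sum_i a i *: y i = \sum_i (a i *: ys i + \sum_j (a i * c i j) *: h j).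
  apply: eq_bigr => i _; case: (ysc i) => _ ->.
  by rewrite scalerDr scaler_sumr; congr (_ + _); apply: eq_bigr => j _; rewrite scalerA.
rewrite big_split /= exchange_big; congr (_ + _).
by apply: eq_bigr => j _; rewrite scaler_suml.
Qed.

(* Writing the last generator as [s' + \sum_j b j *: h j] with [b j] in [m],
   [(1 - b ord_max) *: h ord_max] is a combination of the others, and
   [1 - b ord_max] is a unit. *)
Lemma gen_mod_drop_last q (h : 'I_q.+1 -> V) :
  gen_mod h -> gen_mod (fun j : 'I_q => h (widen_ord (leqnSn q) j)).
Proof.
move=> h_gen; pose h' j := h (widen_ord (leqnSn q) j).
have [s' [b [Ss' mb h_max]]] := gen_mod_max_coef h_gen (h ord_max).
have [u u_inv] := one_sub_max_unit (mb ord_max).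
pose b' j := b (widen_ord (leqnSn q) j).
have h_max' : h ord_max = u *: s' + \sum_(j < q) (u * b' j) *: h' j.
  have -> : \sum_(j < q) (u * b' j) *: h' j = u *: \sum_(j < q) b' j *: h' j.
    by rewrite scaler_sumr; apply: eq_bigr => j _; rewrite scalerA.
  rewrite -scalerDr -[h ord_max]scale1r -u_inv -scalerA; congr (_ *: _).
  by rewrite scalerBl scale1r {1}h_max big_ord_recr /= addrA addrK.
move=> x; have [s [c [Ss ->]]] := h_gen x.
exists (s + (c ord_max * u) *: s'),
  (fun j => c (widen_ord (leqnSn q) j) + c ord_max * (u * b' j)).
split; first by apply: SD => //; apply: SZ.
rewrite big_ord_recr /= h_max' scalerDr scaler_sumr scalerA.
rewrite -!addrA; congr (_ + _); rewrite addrCA; congr (_ + _).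
by rewrite -big_split; apply: eq_bigr => j _ /=; rewrite scalerDl scalerA.
Qed.

Lemma nakayama q (h : 'I_q -> V) : gen_mod h -> forall x, S x.
Proof.
elim: q h => [|q IH] h h_gen x; last exact: IH _ (gen_mod_drop_last h_gen) x.
by have [s [c [Ss ->]]] := h_gen x; rewrite big_ord0 addr0.
Qed.

End Nakayama.

Section IdealPowers.
Variables (k : fieldType) (A : comAlgType k).
Implicit Types I J : A -> Prop.

Definition ideal_mul I J (x : A) : Prop := exists n (a b : 'I_n -> A),
  [/\ forall i, I (a i), forall i, J (b i) & x = \sum_i a i * b i].

Fixpoint ideal_pow I (n : nat) : A -> Prop :=
  if n is n'.+1 then ideal_mul I (ideal_pow I n') else fun _ => True.

Lemma ideal_mul_ideal I J : is_ideal J -> is_ideal (ideal_mul I J).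
Proof.
move=> J_ideal; split.
- by exists 0%N, (fun _ => 0), (fun _ => 0); split; [case | case | rewrite big_ord0].
- move=> x y [n1 [a1 [b1 [Ia1 Jb1 ->]]]] [n2 [a2 [b2 [Ia2 Jb2 ->]]]].
  exists (n1 + n2)%N, (ord_cat a1 a2), (ord_cat b1 b2).
  by split; [exact: ord_cat_forall | exact: ord_cat_forall | rewrite (big_ord_cat2 *%R)].
- move=> c x [n [a [b [Ia Jb ->]]]]; exists n, a, (fun i => c * b i); split=> //.
    by move=> i; have [_ _ JM] := J_ideal; apply: JM.
  by rewrite mulr_sumr; apply: eq_bigr => i _; rewrite mulrCA.
Qed.

Lemma ideal_mul_subr I J x : is_ideal J -> ideal_mul I J x -> J x.
Proof.
move=> J_ideal [n [a [b [Ia Jb ->]]]]; apply: (ideal_sum J_ideal) => i _.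
by have [_ _ JM] := J_ideal; apply: JM.
Qed.

Lemma ideal_mul_subl I J x : is_ideal I -> ideal_mul I J x -> I x.
Proof.
move=> I_ideal [n [a [b [Ia Jb ->]]]]; apply: (ideal_sum I_ideal) => i _.
exact: idealMr.
Qed.

Lemma ideal_mul_mono I I' J J' : ideal_sub I I' -> ideal_sub J J' ->
  ideal_sub (ideal_mul I J) (ideal_mul I' J').
Proof.
move=> II' JJ' x [n [a [b [Ia Jb ->]]]]; exists n, a, b.
by split=> // i; [apply: II' | apply: JJ'].
Qed.

Lemma ideal_mul_mem I J a b : I a -> J b -> ideal_mul I J (a * b).
Proof. by move=> Ia Jb; exists 1%N, (fun _ => a), (fun _ => b); rewrite big_ord1. Qed.

Lemma ideal_pow_ideal I n : is_ideal (ideal_pow I n).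
Proof. by elim: n => [|n IH] //=; apply: ideal_mul_ideal. Qed.

Lemma ideal_pow_leq I n p : (n <= p)%N -> ideal_sub (ideal_pow I p) (ideal_pow I n).
Proof.
move=> /subnK <-; elim: (p - n)%N => [//|i IH] x.
by rewrite addSn => /(ideal_mul_subr (ideal_pow_ideal _ _)) /IH.
Qed.

Lemma ideal_pow_mono I I' n : ideal_sub I I' -> ideal_sub (ideal_pow I n) (ideal_pow I' n).
Proof. by move=> II'; elim: n => [//|n IH] /=; apply: ideal_mul_mono. Qed.

Definition ideal_gen e (g : 'I_e -> A) (x : A) := exists b : 'I_e -> A, x = \sum_i b i * g i.

Lemma ideal_gen_ideal e (g : 'I_e -> A) : is_ideal (ideal_gen g).
Proof.
split.
- by exists (fun _ => 0); rewrite big1 // => i _; rewrite mul0r.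
- move=> x y [b ->] [b' ->]; exists (fun i => b i + b' i).
  by rewrite -big_split; apply: eq_bigr => i _; rewrite mulrDl.
- move=> c x [b ->]; exists (fun i => c * b i).
  by rewrite mulr_sumr; apply: eq_bigr => i _; rewrite mulrA.
Qed.

Definition ideal_adj J (a : A) (x : A) := exists j b, J j /\ x = j + b * a.

Lemma ideal_adj_ideal J a : is_ideal J -> is_ideal (ideal_adj J a).
Proof.
case=> J0 JD JM; split.
- by exists 0, 0; rewrite mul0r addr0.
- move=> x y [j [b [Jj ->]]] [j' [b' [Jj' ->]]]; exists (j + j'), (b + b').
  by rewrite mulrDl addrACA; split=> //; apply: JD.
- move=> c x [j [b [Jj ->]]]; exists (c * j), (c * b).
  by rewrite mulrDr mulrA; split=> //; apply: JM.
Qed.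

Definition adj_pow_expansion J (a : A) (n : nat) (x : A) :=
  exists y : 'I_n.+1 -> A, (forall i : 'I_n.+1, ideal_pow J (n - i) (y i)) /\
     x = \sum_(i < n.+1) a ^+ i * y i.

Lemma expansion0 J a n : adj_pow_expansion J a n 0.
Proof.
exists (fun _ => 0); split; last by rewrite big1 // => i _; rewrite mulr0.
by move=> i; have [] := ideal_pow_ideal J (n - i).
Qed.

Lemma expansionD J a n x y : adj_pow_expansion J a n x -> adj_pow_expansion J a n y ->
  adj_pow_expansion J a n (x + y).
Proof.
move=> [y1 [Jy1 ->]] [y2 [Jy2 ->]]; exists (fun i => y1 i + y2 i); split.
  by move=> i; have [_ JD _] := ideal_pow_ideal J (n - i); apply: JD.
by rewrite -big_split; apply: eq_bigr => i _; rewrite mulrDr.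
Qed.

Lemma expansion_mulJ J a n j z : J j -> adj_pow_expansion J a n z ->
  adj_pow_expansion J a n.+1 (j * z).
Proof.
move=> Jj [y [Jy ->]].
exists (fun i : 'I_n.+2 => if (i <= n)%N then j * y (inord i) else 0); split.
  move=> i; case: ifP => i_le; last by have [] := ideal_pow_ideal J (n.+1 - i).
  by rewrite subSn //=; apply: ideal_mul_mem => //; have := Jy (inord i); rewrite inordK.
rewrite [RHS]big_ord_recr /= ltnn mulr0 addr0 mulr_sumr; apply: eq_bigr => i _ /=.
rewrite -ltnS ltn_ord.
have -> : inord (widen_ord (leqnSn n.+1) i) = i by apply: val_inj; rewrite /= inordK.
by rewrite mulrCA.
Qed.

Lemma expansion_mula J a n b z : adj_pow_expansion J a n z ->
  adj_pow_expansion J a n.+1 (b * a * z).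
Proof.
move=> [y [Jy ->]].
exists (fun i : 'I_n.+2 => if nat_of_ord i is i'.+1 then b * y (inord i') else 0); split.
  move=> [[|i] lt_i] /=; first by have [] := ideal_pow_ideal J n.+1.
  have [_ _ JM] := ideal_pow_ideal J (n - i); apply: JM.
  by have := Jy (inord i); rewrite inordK.
rewrite [RHS]big_ord_recl /= mulr0 add0r mulr_sumr; apply: eq_bigr => i _ /=.
by rewrite add0n inord_val /bump /= add1n exprS -!mulrA mulrCA [b * (_ * _)]mulrCA.
Qed.

Lemma ideal_pow_adj_expansion J a n x : is_ideal J ->
  ideal_pow (ideal_adj J a) n x -> adj_pow_expansion J a n x.
Proof.
move=> J_ideal; elim: n x => [|n IH] x /=.
  move=> _; exists (fun _ => x); split; first by move=> i; rewrite sub0n.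
  by rewrite big_ord1 expr0 mul1r.
move=> [p [c [z [adj_c Jz ->]]]].
apply: (big_ind (adj_pow_expansion J a n.+1)); [exact: expansion0 | exact: expansionD |].
move=> i _; have [j [b [Jj ->]]] := adj_c i.
have IHz := IH _ (Jz i).
by rewrite mulrDl; apply: expansionD; [apply: expansion_mulJ | apply: expansion_mula].
Qed.

Lemma expansion_split J a p s x : is_ideal J -> adj_pow_expansion J a (p + s) x ->
  exists y b, ideal_pow J p y /\ x = y + a ^+ s * b.
Proof.
move=> J_ideal [y [Jy ->]].
exists (\sum_(i < (p + s).+1 | (i < s)%N) a ^+ i * y i),
       (\sum_(i < (p + s).+1 | (s <= i)%N) a ^+ (i - s) * y i); split.
  apply: (ideal_sum (ideal_pow_ideal J p)) => i lt_is.
  have [_ _ JM] := ideal_pow_ideal J p; apply: JM.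
  by apply: ideal_pow_leq (Jy i); rewrite leq_subRL ?leq_addr //; lia.
rewrite (bigID (fun i : 'I__ => (i < s)%N)) /= mulr_sumr; congr (_ + _).
by apply: eq_big => [i|i]; rewrite -?leqNgt // => le_si; rewrite mulrA -exprD subnKC.
Qed.

(* Induction on [e]: with [g'] the first [e] of [e + 1] generators,
   [(g) = (g') + (g_e)], so [(g)^((e + 1) s + 1)] lies in
   [(g')^(e s + 1) + (g_e^s)] by the binomial expansion. *)
Lemma ideal_gen_pow_sub (Q : A -> Prop) s : is_ideal Q ->
  forall e (g : 'I_e -> A), (forall i, Q (g i ^+ s)) ->
  ideal_sub (ideal_pow (ideal_gen g) (e * s + 1)) Q.
Proof.
move=> Q_ideal; elim=> [|e IH] g Qg x.
  rewrite mul0n /= => /(ideal_mul_subl (ideal_gen_ideal g)) [b ->].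
  by rewrite big_ord0; case: Q_ideal.
pose g' i := g (widen_ord (leqnSn e) i).
have gen_adj : ideal_sub (ideal_gen g) (ideal_adj (ideal_gen g') (g ord_max)).
  move=> y [b ->]; rewrite big_ord_recr /=.
  by exists (\sum_(i < e) b (widen_ord (leqnSn e) i) * g' i), (b ord_max); split=> //; eexists.
rewrite (_ : (e.+1 * s + 1 = (e * s + 1) + s)%N); last by rewrite mulSn; lia.
move=> /(ideal_pow_mono gen_adj) /(ideal_pow_adj_expansion (ideal_gen_ideal g')).
move=> /(expansion_split (ideal_gen_ideal g')) [y [b [g'y ->]]].
have [_ QD QM] := Q_ideal; apply: QD; first by apply: (IH g') => // i; apply: Qg.
by rewrite mulrC; apply: QM; apply: Qg.
Qed.

End IdealPowers.

Section Noetherian.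
Variables (k : fieldType) (A : comAlgType k) (m : A -> Prop).
Hypotheses (m_local : local_with_residue_field m) (A_noeth : noetherian A).

Lemma noetherian_acc (C : nat -> A -> Prop) : (forall n, is_ideal (C n)) ->
  (forall n, ideal_sub (C n) (C n.+1)) ->
  exists n0, forall n, (n0 <= n)%N -> ideal_sub (C n) (C n0).
Proof.
move=> C_ideal C_incr.
have C_mono a b : (a <= b)%N -> ideal_sub (C a) (C b).
  move=> /subnK <-; elim: (b - a)%N => [//|i IH] x /IH.
  by rewrite addSn; apply: C_incr.
pose U x := exists n, C n x.
have U_ideal : is_ideal U.
  split.
  - by exists 0%N; case: (C_ideal 0%N).
  - move=> x y [a Cx] [b Cy]; exists (maxn a b); have [_ CD _] := C_ideal (maxn a b).
    by apply: CD; [apply: C_mono (leq_maxl a b) _ Cx | apply: C_mono (leq_maxr a b) _ Cy].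
  - by move=> c x [a Cx]; exists a; have [_ _ CM] := C_ideal a; apply: CM.
have [p [g [Ug U_gen]]] := A_noeth U_ideal.
have [nf Cnf] := choice Ug.
exists (\max_i nf i) => n _ x Cx; have [c ->] := U_gen x (ex_intro _ n Cx).
apply: (ideal_sum (C_ideal _)) => i _; have [_ _ CM] := C_ideal (\max_i nf i); apply: CM.
by apply: C_mono (Cnf i); apply: leq_bigmax.
Qed.

Lemma noetherian_max (F : (A -> Prop) -> Prop) J0 : F J0 ->
  (forall J, F J -> is_ideal J) ->
  exists J, F J /\ forall J', F J' -> ideal_sub J J' -> ideal_sub J' J.
Proof.
move=> FJ0 F_ideal; apply: contrapT => no_max.
have bigger J : exists J', F J -> [/\ F J', ideal_sub J J' & ~ ideal_sub J' J].
  have [FJ|] := pselect (F J); last by exists J.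
  apply: contrapT => no_bigger; apply: no_max; exists J; split=> // J' FJ' JJ'.
  by apply: contrapT => J'J; apply: no_bigger; exists J'.
have [next next_spec] := choice bigger.
pose C n := iter n next J0.
have FC n : F (C n) by elim: n => //= n IH; case: (next_spec _ IH).
have [n0 C_stat] := noetherian_acc (fun n => F_ideal _ (FC n))
  (fun n => let: And3 _ sub _ := next_spec _ (FC n) in sub).
by have [_ _] := next_spec _ (FC n0); apply; apply: (C_stat n0.+1).
Qed.

Definition max_avoiding (Q : A -> Prop) (c : A) := [/\ is_ideal Q, ~ Q c &
  forall J, is_ideal J -> ideal_sub Q J -> ~ J c -> ideal_sub J Q].

Lemma ex_max_avoiding c : c != 0 -> exists Q, max_avoiding Q c.
Proof.
move=> c_neq0; pose F J := is_ideal J /\ ~ J c.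
have F0 : F (fun x => x = 0).
  split; last by move=> c0; rewrite c0 eqxx in c_neq0.
  by split=> // [x y -> ->|a x ->]; rewrite ?addr0 ?mulr0.
have [Q [[Q_ideal Qc] Q_max]] := noetherian_max F0 (fun J FJ => FJ.1).
by exists Q; split=> // J J_ideal QJ Jc; apply: Q_max.
Qed.

Section MaxAvoiding.
Variables (Q : A -> Prop) (c : A).
Hypothesis Q_max : max_avoiding Q c.

Let Q_ideal : is_ideal Q. Proof. by case: Q_max. Qed.
Let Qc_out : ~ Q c. Proof. by case: Q_max. Qed.

Lemma max_avoiding_adj a : ~ Q a -> ideal_adj Q a c.
Proof.
move=> Qa_out; apply: contrapT => adj_c_out; apply: Qa_out.
have Q_adj : ideal_sub Q (ideal_adj Q a) by move=> q Qq; exists q, 0; rewrite mul0r addr0.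
have [_ _ maxQ] := Q_max.
apply: (maxQ _ (ideal_adj_ideal a Q_ideal) Q_adj adj_c_out).
by exists 0, 1; rewrite mul1r add0r; split=> //; case: Q_ideal.
Qed.

(* [c = q + b x] would make [(1 - b x) c] lie in [Q], and [1 - b x] is a unit. *)
Lemma max_avoiding_mul x : m x -> Q (x * c).
Proof.
move=> mx; apply: contrapT => Qxc_out; apply: Qc_out.
have [q [b [Qq c_eq]]] := max_avoiding_adj Qxc_out.
have [u u_inv] : exists u, u * (1 - b * x) = 1.
  by apply: (one_sub_max_unit m_local); have [_ _ mM] := max_ideal m_local; apply: mM.
have -> : c = u * q by rewrite -[c]mul1r -u_inv -mulrA mulrBl mul1r -mulrA {1}c_eq addrK.
by have [_ _ QM] := Q_ideal; apply: QM.
Qed.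

(* The colon ideals [(Q : x^n)] stabilise at some [N]; if [x^N] were not in
   [Q], then [c = q + b x^N] and [x c] in [Q] would put [b] in [(Q : x^(N+1))]. *)
Lemma max_avoiding_pow x : m x -> exists s, Q (x ^+ s).
Proof.
move=> mx; pose C n b := Q (x ^+ n * b).
have C_ideal n : is_ideal (C n).
  have [Q0 QD QM] := Q_ideal; split; rewrite /C.
  - by rewrite mulr0.
  - by move=> a b Qa Qb; rewrite mulrDr; apply: QD.
  - by move=> a b Qb; rewrite mulrCA; apply: QM.
have C_incr n : ideal_sub (C n) (C n.+1).
  by move=> b Cb; rewrite /C exprS -mulrA; have [_ _ QM] := Q_ideal; apply: QM.
have [N C_stat] := noetherian_acc C_ideal C_incr.
exists N; apply: contrapT => QxN_out; apply: Qc_out.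
have [q [b [Qq c_eq]]] := max_avoiding_adj QxN_out.
have [_ QD QM] := Q_ideal; rewrite c_eq; apply: QD => //; rewrite mulrC.
apply: (C_stat N.+1 (leqnSn N)); rewrite /C exprS -mulrA [_ * b]mulrC.
have -> : b * x ^+ N = c - q by rewrite c_eq addrC addKr.
by rewrite mulrBr; apply: (idealB Q_ideal); [apply: max_avoiding_mul | apply: QM].
Qed.

Lemma max_avoiding_pow_max : exists t, ideal_sub (ideal_pow m t) Q.
Proof.
have [e [g [mg m_gen]]] := A_noeth (max_ideal m_local).
have [sf Qsf] := choice (fun i => max_avoiding_pow (mg i)).
pose s := (\max_i sf i)%N.
have Qgs i : Q (g i ^+ s).
  by rewrite /s -(subnKC (leq_bigmax (F:=sf) i)) exprD; apply: idealMr.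
exists (e * s + 1)%N => x mx.
by apply: (ideal_gen_pow_sub Q_ideal Qgs); apply: ideal_pow_mono mx => y /m_gen.
Qed.

End MaxAvoiding.

Lemma ideal_pow_max_span t : exists (T : finType) (w : T -> A),
  spanning_mod (@GRing.scale k A) (ideal_pow m t) w.
Proof.
elim: t => [|t [T [w w_span]]]; first by exists 'I_0, (fun _ => 0) => x; exists (fun _ => 0).
have [L [h [mh mt_gen]]] := A_noeth (ideal_pow_ideal m t).
pose u (o : T + 'I_L) := match o with inl i => w i | inr j => h j end.
exists (T + 'I_L)%type, u => x.
have [c mt_xc] := w_span x.
have [b xc_eq] := mt_gen _ mt_xc.
have [c' m_bc'] := choice (fun j => residue_lift m_local (b j)).
exists (fun o => match o with inl i => c i | inr j => c' j end).
rewrite /lcomb big_sumType /= opprD addrA -/(lcomb _ c w) xc_eq -sumrB.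
exists L, (fun j => b j - (c' j)%:A), h; split=> //.
by apply: eq_bigr => j _; rewrite mulrBl mulr_algl.
Qed.

Lemma colength_of_pow_sub (Q : A -> Prop) t : is_ideal Q ->
  ideal_sub (ideal_pow m t) Q -> ~ Q 1 -> exists2 n, (0 < n)%N & colength Q n.
Proof.
move=> Q_ideal mtQ Q1_out.
have [T [w w_span]] := ideal_pow_max_span t.
have w_span_Q : spanning_mod (@GRing.scale k A) Q w.
  by move=> x; have [c mt_xc] := w_span x; exists c; apply: mtQ.
have QS := lin_subspace_ideal Q_ideal.
have [n [v [v_span v_free]]] := ex_basis_mod QS w_span_Q.
exists n.
  case: n v v_span {v_free} => // v v_span; exfalso; apply: Q1_out.
  by have [c] := v_span 1; rewrite /lcomb big_ord0 subr0.
split=> //; last by exists v.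
move=> J J_spec; apply: (descending_subspaces_stationary QS w_span_Q) => i.
by have [J_ideal QJ J_desc] := J_spec i; split=> //; apply: lin_subspace_ideal.
Qed.

End Noetherian.

Section FiniteFamilies.
Variables (k : fieldType) (A : comAlgType k) (M : lmodType A).

Definition gen_family n (b : 'I_n -> M) := forall x, exists c, x = \sum_i c i *: b i.

Definition free_family n (b : 'I_n -> M) :=
  forall c, \sum_i c i *: b i = 0 -> forall i, c i = 0.

Lemma lcomb_tensor n R (w : 'I_n -> A) (b : 'I_R -> M) (c : 'I_n * 'I_R -> k) :
  lcomb (@kscale k A M) c (fun p => w p.1 *: b p.2) =
  \sum_i lcomb (@GRing.scale k A) (fun a => c (a, i)) w *: b i.
Proof.
rewrite /lcomb; have -> : \sum_(p : 'I_n * 'I_R) kscale (c p) (w p.1 *: b p.2) =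
          \sum_a \sum_i kscale (c (a, i)) (w a *: b i).
  by rewrite pair_big; apply: eq_bigr => -[a i] _.
rewrite exchange_big /=; apply: eq_bigr => i _.
by rewrite scaler_suml; apply: eq_bigr => a _; rewrite /kscale scalerA mulr_algl.
Qed.

Lemma tensor_spanning (I : A -> Prop) n R (w : 'I_n -> A) (b : 'I_R -> M) :
  gen_family b -> spanning_mod (@GRing.scale k A) I w ->
  spanning_mod (@kscale k A M) (idealM I) (fun p => w p.1 *: b p.2).
Proof.
move=> b_gen w_span x; have [c ->] := b_gen x.
have [cw Icw] := choice (fun i => w_span (c i)).
exists (fun p => cw p.2 p.1); rewrite lcomb_tensor -sumrB.
by apply: idealM_sum => i _; rewrite -scalerBl; apply: idealM_scale.
Qed.

(* A relation modulo [I M] among the [w a *: b i] gives, coordinate by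
   coordinate in the basis [b], relations modulo [I] among the [w a]. *)
Lemma tensor_free (I : A -> Prop) n R (w : 'I_n -> A) (b : 'I_R -> M) :
  gen_family b -> free_family b -> is_ideal I -> free_mod (@GRing.scale k A) I w ->
  free_mod (@kscale k A M) (idealM I) (fun p => w p.1 *: b p.2).
Proof.
move=> b_gen b_free I_ideal w_free c; rewrite lcomb_tensor => -[l [a [y [Ia y_eq]]]].
have [cy y_cy] := choice (fun j => b_gen (y j)).
pose cw i := lcomb (@GRing.scale k A) (fun a => c (a, i)) w.
have cw_eq i : cw i = \sum_j a j * cy j i.
  apply/eqP; rewrite -subr_eq0; apply/eqP.
  apply: (b_free (fun i => cw i - \sum_j a j * cy j i)).
  under eq_bigr do rewrite scalerBl.
  rewrite sumrB y_eq; apply/eqP; rewrite subr_eq0; apply/eqP.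
  under eq_bigr do rewrite y_cy scaler_sumr.
  rewrite exchange_big /=; apply: eq_bigr => i' _.
  by rewrite scaler_suml; apply: eq_bigr => j _; rewrite scalerA.
move=> [a0 i0]; apply: (w_free (fun a => c (a, i0))).
by rewrite -/(cw i0) cw_eq; apply: (ideal_sum I_ideal) => j _; apply: (idealMr I_ideal).
Qed.

Lemma tensor_dim_free (I : A -> Prop) n R d (b : 'I_R -> M) :
  gen_family b -> free_family b -> is_ideal I ->
  qdim (@GRing.scale k A) I n -> tensor_dim M I d -> d = (n * R)%N.
Proof.
move=> b_gen b_free I_ideal [w [w_span w_free]] [v [v_span v_free]].
have := basis_mod_card (lin_subspace_idealM M I) v_span v_free
  (tensor_spanning b_gen w_span) (tensor_free b_gen b_free I_ideal w_free).
by rewrite card_prod !card_ord.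
Qed.

End FiniteFamilies.

Lemma ratq_nat_eq (d n r : nat) : (0 < n)%N -> (d%:Q / n%:Q = r%:Q) <-> d = (r * n)%N.
Proof.
move=> n_gt0; have nQ_neq0 : n%:Q != 0 by rewrite intr_eq0 eqz_nat -lt0n.
split=> [dnr|->]; last by rewrite PoszM intrM mulfK.
apply/eqP; rewrite -eqz_nat -(eqr_int rat) PoszM intrM -dnr divfK //.
Qed.

Lemma big_seq_count (J : eqType) (V : zmodType) (S s : seq J) (F : J -> V) :
  uniq S -> {subset s <= S} -> \sum_(j <- s) F j = \sum_(j <- S) F j *+ count_mem j s.
Proof.
move=> S_uniq; elim: s => [|x s IH] sS.
  by rewrite big_nil big1 // => j _; rewrite mulr0n.
rewrite big_cons IH; last by move=> j sj; apply: sS; rewrite inE sj orbT.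
under [RHS]eq_bigr do rewrite /= mulrnDr.
rewrite big_split /=; congr (_ + _).
rewrite (bigD1_seq x) ?sS ?inE ?eqxx //= mulr1n big1 ?addr0 // => j.
by rewrite eq_sym => /negbTE ->; rewrite mulr0n.
Qed.

Section FreeModules.
Variables (k : fieldType) (A : comAlgType k) (M : lmodType A).

(* Only the finitely many basis vectors used to write the generators matter. *)
Lemma free_module_finite_basis : free_module M -> fin_gen_module M ->
  exists R (b : 'I_R -> M), gen_family b /\ free_family b.
Proof.
move=> [J [e [e_span e_free]]] [p [g g_gen]].
have [sf /choice[cf g_eq]] := choice (fun i => e_span (g i)).
pose S := undup (flatten (map sf (enum 'I_p))).
have S_uniq : uniq S := undup_uniq _.
have sf_S i : {subset sf i <= S}.
  move=> j sfj; rewrite mem_undup; apply/flattenP; exists (sf i) => //.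
  by apply: map_f; rewrite mem_enum.
pose t := in_tuple S.
exists (size S), (fun l => e (tnth t l)); split.
  move=> x; have [c ->] := g_gen x.
  exists (fun l => \sum_i (c i * cf i (tnth t l)) *+ count_mem (tnth t l) (sf i)).
  rewrite -[RHS](big_tnth _ _ S xpredT (fun j =>
    (\sum_i (c i * cf i j) *+ count_mem j (sf i)) *: e j)).
  under [LHS]eq_bigr do rewrite g_eq (big_seq_count _ S_uniq (sf_S _)) scaler_sumr.
  rewrite exchange_big /=; apply: eq_bigr => j _.
  rewrite scaler_suml; apply: eq_bigr => i _.
  by rewrite -scalerMnl -scalerMnr scalerA.
move=> c c_rel l.
have t_inj : injective (tnth t) by apply/tuple_uniqP.
pose C j := \sum_(l | tnth t l == j) c l.
have C_t l' : C (tnth t l') = c l'.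
  by rewrite /C (bigD1 l') //= big1 ?addr0 // => l'' /andP[/eqP/t_inj ->]; rewrite eqxx.
rewrite -C_t; apply: (e_free S C S_uniq); last exact: mem_tnth.
by rewrite big_tnth -[RHS]c_rel; apply: eq_big => // i _; rewrite C_t.
Qed.

Lemma free_module_of_basis n (b : 'I_n -> M) :
  gen_family b -> free_family b -> free_module M.
Proof.
move=> b_gen b_free; exists 'I_n, b; split.
  by move=> x; have [c ->] := b_gen x; exists (index_enum 'I_n), c.
move=> s c s_uniq s_rel j sj.
pose c' i := if i \in s then c i else 0.
suff /b_free/(_ j) : \sum_i c' i *: b i = 0 by rewrite /c' sj.
rewrite -[RHS]s_rel [RHS]big_uniq // [RHS]big_mkcond; apply: eq_bigr => i _.
by rewrite /c'; case: ifP => //; rewrite scale0r.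
Qed.

Variable m : A -> Prop.
Hypothesis m_local : local_with_residue_field m.

Lemma residue_field_basis : qdim (@GRing.scale k A) m 1.
Proof.
exists (fun _ => 1); split.
  move=> a; have [c mac] := residue_lift m_local a.
  by exists (fun _ => c); rewrite /lcomb big_ord1.
move=> c; rewrite big_ord1 => m_c i; rewrite (ord1 i).
apply: contrapT => /eqP c0_neq0; apply: (max_ideal_neq1 m_local).
by have := idealZ (max_ideal m_local) (c 0)^-1 m_c; rewrite scalerA mulVf // scale1r.
Qed.

(* Nakayama's lemma applied to the [A]-span of [v]. *)
Lemma residue_basis_gen r (v : 'I_r -> M) : fin_gen_module M ->
  spanning_mod (@kscale k A M) (idealM m) v -> gen_family v.
Proof.
move=> [p [g g_gen]] v_span x; pose S y := exists c, y = \sum_i c i *: v i.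
apply: (@nakayama k A m m_local M S _ _ _ _ p g).
- by exists (fun _ => 0); rewrite big1 // => i _; rewrite scale0r.
- move=> y z [c ->] [c' ->]; exists (fun i => c i + c' i).
  by rewrite -big_split; apply: eq_bigr => i _; rewrite scalerDl.
- move=> a y [c ->]; exists (fun i => a * c i).
  by rewrite scaler_sumr; apply: eq_bigr => i _; rewrite scalerA.
- move=> y; have [c [l [a [z [ma yc_eq]]]]] := v_span y.
  exists (lcomb (@kscale k A M) c v), l, a, z; split=> //.
    by exists (fun i => (c i)%:A).
  by rewrite -yc_eq addrC subrK.
- move=> y; have [c ->] := g_gen y; exists 0, c; split; last by rewrite add0r.
  by exists (fun _ => 0); rewrite big1 // => i _; rewrite scale0r.
Qed.

End FreeModules.

Section Main.
Variables (k : fieldType) (A : comAlgType k) (m : A -> Prop) (M : lmodType A).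
Hypothesis m_local : local_with_residue_field m.

Definition tensor_dim_ratio := forall (n : nat) (I : A -> Prop), (0 < n)%N -> colength I n ->
  forall d r : nat, tensor_dim M I d -> tensor_dim M m r -> (d%:Q / n%:Q = r%:Q)%R.

(* The coefficients of a relation among the [v i], written in a [k]-basis of
   [A / I], give a relation modulo [I M] among the [n * r] products spanning
   [M / I M]; it is nontrivial as soon as some coefficient is outside [I]. *)
Lemma tensor_dim_lt_relation (I : A -> Prop) n r d (v : 'I_r -> M) (c : 'I_r -> A) i0 :
  is_ideal I -> gen_family v -> qdim (@GRing.scale k A) I n ->
  \sum_i c i *: v i = 0 -> ~ I (c i0) -> tensor_dim M I d -> (d < n * r)%N.
Proof.
move=> I_ideal v_gen [w [w_span _]] c_rel Ici0_out [u [_ u_free]].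
have [cw Icw] := choice (fun i => w_span (c i)).
pose cvw (q : 'I_n * 'I_r) := cw q.2 q.1.
have IM_rel : idealM I (lcomb (@kscale k A M) cvw (fun q => w q.1 *: v q.2)).
  rewrite lcomb_tensor -[X in idealM I X]subr0 -[X in idealM I (_ - X)]c_rel -sumrB.
  apply: idealM_sum => i _; rewrite -scalerBl; apply: idealM_scale.
  by rewrite -opprB; apply: (idealN I_ideal).
have [a0 cw_a0] : exists a0, cw i0 a0 != 0.
  apply: contrapT => cw0; apply: Ici0_out; have := Icw i0.
  rewrite /lcomb big1 ?subr0 // => a _.
  have -> : cw i0 a = 0 by apply: contrapT => /eqP cwa; apply: cw0; exists a.
  by rewrite scale0r.
have := free_mod_card_lt_relation (lin_subspace_idealM M I)
  (tensor_spanning v_gen w_span) IM_rel (j0 := (a0, i0)) cw_a0 u_free.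
by rewrite card_prod !card_ord.
Qed.

Lemma free_tensor_dim_ratio : free_module M -> fin_gen_module M -> tensor_dim_ratio.
Proof.
move=> M_free M_fg n I n_gt0 [I_ideal _ I_qdim] d r dI dm.
have [R [b [b_gen b_free]]] := free_module_finite_basis M_free M_fg.
apply/ratq_nat_eq => //.
have m_qdim := residue_field_basis m_local.
rewrite (tensor_dim_free b_gen b_free I_ideal I_qdim dI).
by rewrite (tensor_dim_free b_gen b_free (max_ideal m_local) m_qdim dm) mul1n mulnC.
Qed.

Lemma tensor_dim_ratio_free :
  noetherian A -> fin_gen_module M -> tensor_dim_ratio -> free_module M.
Proof.
move=> A_noeth M_fg ratio; have [p [g g_gen]] := M_fg.
have g_span : spanning_mod (@kscale k A M) (idealM m) g.
  move=> x; have [c ->] := g_gen x.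
  have [cg m_cg] := choice (fun i => residue_lift m_local (c i)).
  exists cg; rewrite /lcomb -sumrB; apply: idealM_sum => i _.
  by rewrite /kscale -scalerBl; apply: idealM_scale.
have [r [v [v_span v_free]]] := ex_basis_mod (lin_subspace_idealM M m) g_span.
have v_gen := residue_basis_gen m_local M_fg v_span.
apply: (free_module_of_basis v_gen) => c c_rel i0; apply: contrapT => /eqP ci0_neq0.
have [Q Q_max] := ex_max_avoiding A_noeth ci0_neq0.
have [Q_ideal Qc_out _] := Q_max.
have Q1_out : ~ Q 1.
  by move=> Q1; apply: Qc_out; rewrite -[c i0]mulr1; case: Q_ideal => _ _; apply.
have [t mtQ] := max_avoiding_pow_max m_local A_noeth Q_max.
have [n n_gt0 Q_col] := colength_of_pow_sub m_local A_noeth Q_ideal mtQ Q1_out.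
have [_ _ Q_qdim] := Q_col; have [w [w_span _]] := Q_qdim.
have [d [u [u_span u_free]]] :=
  ex_basis_mod (lin_subspace_idealM M Q) (tensor_spanning v_gen w_span).
have dQ : tensor_dim M Q d by exists u.
have := tensor_dim_lt_relation Q_ideal v_gen Q_qdim c_rel Qc_out dQ.
have dm : tensor_dim M m r by exists v.
by rewrite ((ratq_nat_eq _ _ n_gt0).1 (ratio n Q n_gt0 Q_col d r dQ dm)) mulnC ltnn.
Qed.

End Main.

Unset Implicit Arguments.

Theorem proposition3 (k : closedFieldType) (A : comAlgType k) (m : A -> Prop)
  (M : lmodType A) :
  noetherian A -> local_with_residue_field m -> fin_gen_module M ->
  (free_module M <->
   (forall (n : nat) (I : A -> Prop), (0 < n)%N -> colength I n ->
      forall d r : nat, tensor_dim M I d -> tensor_dim M m r ->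
        (d%:Q / n%:Q = r%:Q)%R)).
Proof.
move=> A_noeth m_local M_fg; split=> [M_free|ratio].
  exact: (free_tensor_dim_ratio m_local M_free M_fg).
exact: (tensor_dim_ratio_free m_local A_noeth M_fg ratio).
Qed.
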